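(* Let $q$ be a prime power, $n\ge 1$, and let $\ell$ be an integer with $1\le \ell\le n(q-1)$ and $\ell\equiv 0\pmod{q-1}$. Then the all-ones vector $\mathbf{1}=(1,\dots,1)\in\mathbb{F}_q^N$ does not lie in $C_{n,\ell}^q$. In particular, $C_{n,n(q-1)}^q$ is an LCD code, i.e. $C_{n,n(q-1)}^q\cap (C_{n,n(q-1)}^q)^\perp=\{0\}$.
   Context: For a prime power $q$ and integers $n\ge 1$, $k\ge 0$, the projective Reed-Muller code $C_{n,k}^q\subseteq \mathbb{F}_q^N$, $N=\frac{q^{n+1}-1}{q-1}$, is defined as follows. For each point of $\mathbb{P}^n(\mathbb{F}_q)$ choose the affine representative $(p_0,\dots,p_n)\in\mathbb{F}_q^{n+1}\setminus\{0\}$ whose left-most nonzero coordinate equals $1$, and fix an ordering $P_1',\dots,P_N'$ of these representatives. Then $C_{n,k}^q=\{(F(P_1'),\dots,F(P_N')) : F\in \mathbb{F}_q[x_0,\dots,x_n]_k\}$, where $\mathbb{F}_q[x_0,\dots,x_n]_k$ is the space of homogeneous polynomials of degree $k$ together with $0$. For $C\subseteq\mathbb{F}_q^N$ linear, $C^\perp=\{y:\sum_i y_ic_i=0\ \forall c\in C\}$ (standard dot product), and $\operatorname{Hull}(C)=C\cap C^\perp$. $C$ is LCD if $\operatorname{Hull}(C)=\{0\}$. *)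

From HB Require Import structures.
From mathcomp Require Import all_boot all_algebra all_field.
From mathcomp Require Import mpoly.
Set Implicit Arguments. Unset Strict Implicit. Unset Printing Implicit Defensive.
Import GRing.Theory.
Local Open Scope ring_scope.

(* The normalized affine representative of a projective point of P^n(F):
   a vector of F^(n+1) whose left-most nonzero coordinate equals 1. *)
Definition normalized (F : fieldType) (n : nat) (v : {ffun 'I_n.+1 -> F}) : bool :=
  [exists i : 'I_n.+1, (v i == 1) && [forall j : 'I_n.+1, (j < i)%N ==> (v j == 0)]].

(* The finite index set of the code: the normalized representatives P'_1..P'_N. *)
Definition proj_pts (F : finFieldType) (n : nat) : finType :=
  {v : {ffun 'I_n.+1 -> F} | normalized v}.

(* Words of F_q^N, indexed by the points (the ordering is irrelevant). *)
Definition word (F : finFieldType) (n : nat) : Type := {ffun proj_pts F n -> F}.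

Definition evalvec (F : finFieldType) (n : nat) (p : {mpoly F[n.+1]}) : word F n :=
  [ffun P : proj_pts F n => p.@[fun i => (val P) i]].

(* Projective Reed-Muller code C_{n,k}^q: evaluations of homogeneous
   polynomials of degree k (together with 0, which is k.-homog). *)
Definition PRM (F : finFieldType) (n k : nat) (c : word F n) : Prop :=
  exists p : {mpoly F[n.+1]}, p \is k.-homog /\ c = evalvec p.

Definition dotw (F : finFieldType) (n : nat) (x y : word F n) : F :=
  \sum_(P : proj_pts F n) x P * y P.

Definition dual (F : finFieldType) (n : nat) (C : word F n -> Prop) (y : word F n) : Prop :=
  forall c, C c -> dotw y c = 0.

Definition is_LCD (F : finFieldType) (n : nat) (C : word F n -> Prop) : Prop :=
  forall c : word F n, C c -> dual C c -> c = 0.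

Definition ones (F : finFieldType) (n : nat) : word F n := [ffun => 1].

From HB Require Import structures.
From mathcomp Require Import all_boot all_algebra all_field.
From mathcomp Require Import fingroup cyclic.
From mathcomp Require Import mpoly.
Set Implicit Arguments. Unset Strict Implicit. Unset Printing Implicit Defensive.
Import GRing.Theory FinRing.Theory.
Local Open Scope ring_scope.

(* If a form p of degree l, with q - 1 dividing l, evaluates to 1 at every
   normalized point, then p(x) = [x != 0] on all of F^(n+1): a nonzero x is
   c * P for a normalized P and c != 0, and c ^+ l = 1. Summing over F^(n+1)
   gives q^(n+1) - 1 = -1, whereas the sum of any form of degree
   l < (n+1)(q-1) vanishes, because sum_(x in F) x^a = 0 for a < q - 1.
   For l = n(q-1), given a point R and a coordinate i with R_i != 0, there is
   a form of degree n(q-1) whose evaluation is the indicator of R on the points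
   Q with Q_i != 0 and does not depend on R elsewhere. A word of the dual is
   orthogonal to all of them, hence constant; if it is also in the code and
   nonzero, rescaling puts the all-ones word in the code. *)

Section FinFieldPowerSums.
Variable F : finFieldType.
Local Notation q := #|F|.

Lemma natr_card_finField : q%:R = 0 :> F.
Proof. by rewrite -cardsT -zmodXgE expg_cardG ?inE. Qed.

Lemma expf_card1 (x : F) : x != 0 -> x ^+ (q - 1) = 1.
Proof.
move=> x_neq0; apply: (mulfI x_neq0); rewrite -exprS mulr1 subn1.
by rewrite prednK ?expf_card // (ltn_trans _ (finNzRing_gt1 F)).
Qed.

Lemma expf_card1_indicator (x : F) : x ^+ (q - 1) = (x != 0)%:R.
Proof.
have [->|/expf_card1 //] := eqVneq x 0.
by rewrite expr0n subn_eq0 leqNgt finNzRing_gt1.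
Qed.

Lemma exists_expf_neq1 a : (0 < a)%N -> (a < q - 1)%N ->
  exists2 c : F, c != 0 & c ^+ a != 1.
Proof.
move=> a_gt0 lt_a_q1; apply/exists_inP; apply: contraLR lt_a_q1.
move=> /exists_inPn units_roots; rewrite -leqNgt.
have nz_p : ('X^a - 1 : {poly F}) != 0 by rewrite -size_poly_eq0 size_XnsubC.
have := max_poly_roots nz_p (rs := enum (predC1 (0 : F))).
rewrite size_XnsubC // enum_uniq -cardE cardC1 subn1 ltnS; apply=> //.
apply/allP => x; rewrite mem_enum => x_neq0.
by rewrite rootE !hornerE subr_eq0 (negbNE (units_roots x _)).
Qed.

Lemma sum_expf_eq0 a : (a < q - 1)%N -> \sum_(x : F) x ^+ a = 0.
Proof.
case: (posnP a) => [-> _|a_gt0 lt_a_q1].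
  by rewrite (eq_bigr (fun=> 1)) // sumr_const cardT -cardE natr_card_finField.
have [c c_neq0 ca_neq1] := exists_expf_neq1 a_gt0 lt_a_q1.
have sum_scaled : \sum_(x : F) x ^+ a = c ^+ a * \sum_(x : F) x ^+ a.
  by rewrite mulr_sumr (reindex_inj (mulfI c_neq0)); under eq_bigr do rewrite exprMn.
suff: (c ^+ a - 1) * \sum_(x : F) x ^+ a = 0.
  by move/eqP; rewrite mulf_eq0 subr_eq0 (negbTE ca_neq1) => /eqP.
by rewrite mulrBl mul1r -sum_scaled subrr.
Qed.

Lemma sum_nonzero_indicator k : (0 < k)%N ->
  \sum_(x : {ffun 'I_k -> F}) (x != 0)%:R = -1 :> F.
Proof.
move=> k_gt0; rewrite (bigD1 (0 : {ffun 'I_k -> F})) //= eqxx add0r.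
rewrite (eq_bigr (fun=> 1)) => [|x /negbTE-> //].
have qk_gt0 : (0 < #|F| ^ k)%N by rewrite expn_gt0 (ltnW (finNzRing_gt1 F)).
rewrite sumr_const cardC1 card_ffun card_ord -subn1 natrB // natrX.
by rewrite natr_card_finField expr0n gtn_eqF // sub0r.
Qed.

End FinFieldPowerSums.

Section HomogeneousSums.
Variables (F : finFieldType) (k : nat).
Local Notation q := #|F|.
Implicit Types (p : {mpoly F[k]}).

Lemma sum_monomial_eq0 (m : 'X_{1..k}) : (mdeg m < k * (q - 1))%N ->
  \sum_(x : {ffun 'I_k -> F}) \prod_(i < k) x i ^+ m i = 0.
Proof.
move=> lt_m; rewrite -(bigA_distr_bigA (fun i (y : F) => y ^+ m i)) /=.
have [i lt_mi] : exists i, (m i < q - 1)%N.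
  apply/existsP; apply: contraLR lt_m; rewrite negb_exists -leqNgt => /forallP ge_m.
  rewrite mdegE -[k in (k * _)%N]card_ord -sum_nat_const.
  by apply: leq_sum => i _; rewrite leqNgt ge_m.
by rewrite (bigD1 i) //= sum_expf_eq0 // mul0r.
Qed.

Lemma sum_meval_homog_eq0 p d : p \is d.-homog -> (d < k * (q - 1))%N ->
  \sum_(x : {ffun 'I_k -> F}) p.@[fun i => x i] = 0.
Proof.
move=> /dhomogP p_homog lt_d; under eq_bigr do rewrite mevalE.
rewrite exchange_big /= big1_seq // => m /andP[_ m_supp].
by rewrite -mulr_sumr sum_monomial_eq0 ?mulr0 // p_homog.
Qed.

Lemma meval_homog0 p d : p \is d.-homog -> (0 < d)%N -> p.@[fun=> 0] = 0.
Proof.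
move=> /dhomogP p_homog d_gt0; rewrite mevalE big1_seq // => m /andP[_ m_supp].
have [i mi_gt0] : exists i, (0 < m i)%N.
  apply/existsP; apply: contraLR d_gt0; rewrite negb_exists => /forallP m0.
  rewrite -(p_homog m m_supp) -leqNgt leqn0 mdeg_eq0; apply/eqP/mnmP => i.
  by rewrite mnm0E; apply/eqP; rewrite -leqn0 leqNgt m0.
by rewrite (bigD1 i) //= expr0n gtn_eqF // mul0r mulr0.
Qed.

Lemma meval_homogZ p d (c : F) (v : 'I_k -> F) : p \is d.-homog ->
  p.@[fun i => c * v i] = c ^+ d * p.@[v].
Proof.
move=> /dhomogP p_homog; rewrite !mevalE mulr_sumr; apply: eq_big_seq => m m_supp.
under eq_bigr do rewrite exprMn.
by rewrite big_split /= prodrXr -mdegE p_homog // mulrCA.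
Qed.

End HomogeneousSums.

Lemma dhomog_prod_const (R : nzRingType) k (I : Type) (r : seq I)
    (f : I -> {mpoly R[k]}) d :
  (forall j, f j \is d.-homog) -> \prod_(j <- r) f j \is (size r * d).-homog.
Proof.
move=> f_homog; elim: r => [|j r IHr]; first by rewrite big_nil dhomog1.
by rewrite big_cons mulSn; apply: dhomogM.
Qed.

Section ProjectivePoints.
Variables (F : finFieldType) (n : nat).
Implicit Types (P Q : proj_pts F n) (c : F).

Lemma proportional_proj_pts_eq P Q c : (forall j, val Q j = c * val P j) -> Q = P.
Proof.
case: P Q => [P P_normalized] [Q Q_normalized] /= QcP.
have /existsP[kP /andP[/eqP P1 /forallP P0]] := P_normalized.
have /existsP[kQ /andP[/eqP Q1 /forallP Q0]] := Q_normalized.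
have [lt_kQP|lt_kPQ|eq_k] := ltngtP kQ kP.
- have := QcP kQ; rewrite Q1 (eqP (implyP (P0 kQ) lt_kQP)) mulr0 => /eqP.
  by rewrite oner_eq0.
- have := QcP kP; rewrite P1 mulr1 (eqP (implyP (Q0 kP) lt_kPQ)) => c0.
  by have := QcP kQ; rewrite Q1 -c0 mul0r => /eqP; rewrite oner_eq0.
- have c1 : c = 1 by have := QcP kQ; rewrite Q1 (val_inj eq_k) P1 mulr1.
  by apply: val_inj; apply/ffunP => j; rewrite /= QcP c1 mul1r.
Qed.

Lemma proj_pt_decomp (x : {ffun 'I_n.+1 -> F}) : x != 0 ->
  exists P, exists2 c, c != 0 & forall j, x j = c * val P j.
Proof.
move=> x_neq0; have [i xi_neq0] : exists i, x i != 0.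
  apply/existsP; apply: contraR x_neq0 => /existsPn x0.
  by apply/eqP/ffunP => i; rewrite ffunE; apply/eqP/negbNE.
case: (@arg_minnP _ _ (fun j => x j != 0) val xi_neq0) => k xk_neq0 k_min.
pose v := [ffun j => (x k)^-1 * x j].
have v_normalized : normalized v.
  apply/existsP; exists k; rewrite ffunE mulVf // eqxx /=.
  apply/forallP => j; apply/implyP => lt_jk; rewrite ffunE.
  have [xj0|/k_min] := eqVneq (x j) 0; first by rewrite xj0 mulr0.
  by rewrite leqNgt lt_jk.
exists (exist _ v v_normalized), (x k) => // j.
by rewrite ffunE mulrA mulfV // mul1r.
Qed.

Lemma normalized_ones : normalized [ffun _ : 'I_n.+1 => 1 : F].
Proof. by apply/existsP; exists ord0; rewrite ffunE eqxx; apply/forallP. Qed.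

Definition proj_pt1 : proj_pts F n := exist _ [ffun=> 1] normalized_ones.

Lemma proj_pts_cross_neq0 P Q i : val P i != 0 -> Q != P ->
  exists2 j, j != i & val P i * val Q j - val P j * val Q i != 0.
Proof.
move=> Pi_neq0 QP; apply/exists_inP; apply: contraR QP => /exists_inPn cross0.
apply/eqP/(@proportional_proj_pts_eq _ _ (val Q i / val P i)) => j.
have [->|ji] := eqVneq j i; first by rewrite divfK.
move: (cross0 j ji); rewrite negbK subr_eq0 => /eqP cross_eq.
by apply: (mulfI Pi_neq0); rewrite cross_eq mulrCA mulrA divfK // mulrC.
Qed.

End ProjectivePoints.

Section ProjectiveReedMuller.
Variables (F : finFieldType) (n : nat).
Local Notation q := #|F|.
Implicit Types (P Q R : proj_pts F n) (p : {mpoly F[n.+1]}).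

Lemma meval_indicator_of_ones p l :
  p \is l.-homog -> (0 < l)%N -> (q - 1 %| l)%N -> evalvec p = ones F n ->
  forall x : {ffun 'I_n.+1 -> F}, p.@[fun i => x i] = (x != 0)%:R.
Proof.
move=> p_homog l_gt0 dvd_l p_ones x.
have [->|x_neq0] := eqVneq x 0.
  rewrite (@meval_eq _ _ _ (fun=> 0)) ?(meval_homog0 p_homog) // => i.
  by rewrite ffunE.
have [P [c c_neq0 x_cP]] := proj_pt_decomp x_neq0.
rewrite (meval_eq _ x_cP) (meval_homogZ _ _ p_homog).
have -> : p.@[fun i => val P i] = 1.
  by have := congr1 (fun w : word F n => w P) p_ones; rewrite !ffunE.
case/dvdnP: dvd_l => e ->.
by rewrite mulr1 mulnC exprM expf_card1 // expr1n.
Qed.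

Lemma ones_notin_PRM l : (0 < l)%N -> (l <= n * (q - 1))%N -> (q - 1 %| l)%N ->
  ~ PRM l (ones F n).
Proof.
move=> l_gt0 le_l dvd_l [p [p_homog p_ones]].
have lt_l : (l < n.+1 * (q - 1))%N.
  by rewrite (leq_ltn_trans le_l) // ltn_mul2r subn_gt0 finNzRing_gt1 ltnSn.
have := sum_meval_homog_eq0 p_homog lt_l.
under eq_bigr do rewrite (meval_indicator_of_ones p_homog) //.
by rewrite sum_nonzero_indicator // => /eqP; rewrite oppr_eq0 oner_eq0.
Qed.

(* At a point Q with Q_i != 0 the j-th factor is 1 - [P_i Q_j != P_j Q_i],
   so the product is the indicator of Q = P; at a point with Q_i = 0 the
   product is sep_tail i Q, which does not depend on P. *)
Definition sep_poly P i : {mpoly F[n.+1]} :=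
  \prod_(j <- enum (predC1 i))
     ('X_i ^+ (q - 1) - (val P i *: 'X_j - val P j *: 'X_i) ^+ (q - 1)).

Definition sep_tail i Q : F := \prod_(j <- enum (predC1 i)) - val Q j ^+ (q - 1).

Lemma sep_poly_homog P i : sep_poly P i \is (n * (q - 1)).-homog.
Proof.
have X_homog j : 'X_j \is [in F[n.+1], 1.-homog].
  by rewrite dhomogX; apply/eqP; exact: mdeg1.
have linear_pow_homog (p : {mpoly F[n.+1]}) : p \is 1.-homog ->
    p ^+ (q - 1) \is (q - 1).-homog.
  by move=> /(dhomogMn (q - 1)); rewrite mul1n.
have -> : (n * (q - 1) = size (enum (predC1 i)) * (q - 1))%N.
  by rewrite -cardE cardC1 card_ord.
apply: dhomog_prod_const => j; apply: rpredB; apply: linear_pow_homog.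
  exact: X_homog.
by apply: rpredB; apply/dhomogZ/X_homog.
Qed.

Lemma sep_poly_eval P i Q : val P i != 0 ->
  evalvec (sep_poly P i) Q = if val Q i == 0 then sep_tail i Q else (Q == P)%:R.
Proof.
move=> Pi_neq0; rewrite ffunE rmorph_prod /=.
under eq_bigr do rewrite mevalB !rmorphXn /= mevalB !mevalZ !mevalXU.
have [Qi0|Qi_neq0] := eqVneq (val Q i) 0.
  apply: eq_bigr => j _; rewrite Qi0 mulr0 subr0 expr0n subn_eq0 leqNgt.
  by rewrite finNzRing_gt1 sub0r exprMn expf_card1 // mul1r.
under eq_bigr do rewrite expf_card1 // expf_card1_indicator.
have [->|QP] := eqVneq Q P.
  by rewrite big1_seq // => j _; rewrite mulrC subrr eqxx subr0.
have [j ji cross_neq0] := proj_pts_cross_neq0 Pi_neq0 QP.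
by rewrite (bigD1_seq j) ?mem_enum ?enum_uniq //= cross_neq0 subrr mul0r.
Qed.

Local Notation top_PRM := (@PRM F n (n * (q - 1))).

Lemma dual_top_PRM_coord (c : word F n) R i :
  dual top_PRM c -> val R i != 0 ->
  c R = - \sum_(Q : proj_pts F n) (if val Q i == 0 then c Q * sep_tail i Q else 0).
Proof.
move=> c_dual Ri_neq0.
have := c_dual _ (ex_intro _ (sep_poly R i) (conj (sep_poly_homog R i) erefl)).
rewrite /dotw; under eq_bigr do rewrite sep_poly_eval //.
have split_term Q : c Q * (if val Q i == 0 then sep_tail i Q else (Q == R)%:R) =
    (if val Q i == 0 then c Q * sep_tail i Q else 0) + c Q * (Q == R)%:R.
  have [Qi0|_] := eqVneq (val Q i) 0; last by rewrite add0r.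
  have QR : Q != R by apply: contraNneq Ri_neq0 => <-; rewrite Qi0.
  by rewrite (negbTE QR) mulr0 addr0.
under eq_bigr do rewrite split_term.
rewrite big_split /= [X in _ + X](bigD1 R) //= eqxx mulr1.
rewrite [X in _ + (_ + X)]big1 => [|Q /negbTE-> //]; last by rewrite mulr0.
by rewrite addr0 addrC => /eqP; rewrite addr_eq0 => /eqP.
Qed.

Lemma dual_top_PRM_const (c : word F n) :
  dual top_PRM c -> forall R, c R = c (proj_pt1 F n).
Proof.
(* The pivot coordinate i of R is also nonzero in proj_pt1, so both values are
   given by the same sum. *)
move=> c_dual R; have /existsP[i /andP[/eqP Ri1 _]] := valP R.
rewrite (dual_top_PRM_coord c_dual (i := i)) ?Ri1 ?oner_eq0 //.
by rewrite (dual_top_PRM_coord c_dual (i := i)) //= ffunE oner_eq0.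
Qed.

Lemma top_PRM_LCD : (0 < n)%N -> is_LCD top_PRM.
Proof.
move=> n_gt0 c [p [p_homog c_eval]] c_dual.
have c_const := dual_top_PRM_const c_dual.
have [c0|c_neq0] := eqVneq (c (proj_pt1 F n)) 0.
  by apply/ffunP => R; rewrite ffunE c_const c0.
case: (@ones_notin_PRM (n * (q - 1))).
- by rewrite muln_gt0 n_gt0 subn_gt0 finNzRing_gt1.
- by [].
- exact: dvdn_mull.
exists ((c (proj_pt1 F n))^-1 *: p); split; first exact: dhomogZ.
apply/ffunP => R; rewrite !ffunE mevalZ.
have := congr1 (fun w : word F n => w R) c_eval; rewrite ffunE => <-.
by rewrite c_const mulVf.
Qed.

End ProjectiveReedMuller.

Theorem mainTheorem3 (F : finFieldType) (n l : nat) :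
  (1 <= n)%N ->
  (1 <= l)%N -> (l <= n * (#|F| - 1))%N -> (#|F| - 1 %| l)%N ->
  ~ PRM l (ones F n) /\ is_LCD (@PRM F n (n * (#|F| - 1))).
Proof.
move=> n_gt0 l_gt0 le_l dvd_l.
by split; [exact: ones_notin_PRM | exact: top_PRM_LCD].
Qed.
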